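(* Consider the sampling-based safety filter described in the context, run in closed loop for $t=0,1,2,\dots$ with $\mathbf{x}_{t+1}=f(\mathbf{x}_t,\mathbf{u}^{\mathrm{safe}}_t)$ and arbitrary nominal inputs. Let $\mathcal{C}\subseteq\mathcal{X}$ be a safe control invariant set with a known invariance control law $\mathbf{u}^{\mathrm{inv}}:\mathcal{C}\to\mathcal{U}$ satisfying $f(\mathbf{x},\mathbf{u}^{\mathrm{inv}}(\mathbf{x}))\in\mathcal{C}$ for every $\mathbf{x}\in\mathcal{C}$. Suppose the sampling space is restricted to control sequences whose terminal state lies in $\mathcal{C}$, i.e., at every time $t$ every sampled sequence $U^i_{t+1}$, rolled out from $\mathbf{x}_{t+1}=f(\mathbf{x}_t,\mathbf{u}^{\mathrm{nom}}_t)$, has terminal state $\mathbf{x}^{U^i_{t+1}}_H\in\mathcal{C}$. If the filter does not intervene at $t=0$, i.e. $\mathbf{u}^{\mathrm{safe}}_0=\mathbf{u}^{\mathrm{nom}}_0$, then the filter guarantees safety at all timesteps $t\ge0$: for every $t\ge 0$ there exists a control sequence $U_{t+1}\in\mathcal{U}^H$ whose rollout from $\mathbf{x}_{t+1}=f(\mathbf{x}_t,\mathbf{u}^{\mathrm{safe}}_t)$ is safe.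
   Context: Consider a deterministic discrete-time system $\mathbf{x}_{t+1}=f(\mathbf{x}_t,\mathbf{u}_t)$ with states $\mathbf{x}_t\in\mathcal{X}$ and inputs $\mathbf{u}_t\in\mathcal{U}$. Let $l:\mathcal{X}\to\mathbb{R}$ be a level function and $\mathcal{L}=\{\mathbf{x}: l(\mathbf{x})\le 0\}$ the failure set. Fix a horizon $H\ge1$. For a state $\mathbf{x}$ and $U=(\mathbf{u}_0,\dots,\mathbf{u}_{H-1})\in\mathcal{U}^H$, the rollout is $\mathbf{x}^U_0=\mathbf{x}$, $\mathbf{x}^U_{k+1}=f(\mathbf{x}^U_k,\mathbf{u}_k)$, with terminal state $\mathbf{x}^U_H$; the trajectory is safe ($\mathcal{O}_\tau=1$) if $\mathbf{x}^U_k\notin\mathcal{L}$ for all $k\in\{0,\dots,H\}$, and its cost is $C(\tau)=\max_{k\in\{0,\dots,H\}}\{-l(\mathbf{x}^U_k)\}$ (so $C(\tau)<0$ iff the trajectory is safe). A set $\mathcal{C}\subseteq\mathcal{X}$ is a safe control invariant set if $\mathcal{C}\cap\mathcal{L}=\emptyset$ and for every $\mathbf{x}\in\mathcal{C}$ there is $\mathbf{u}^{\mathrm{inv}}(\mathbf{x})\in\mathcal{U}$ with $f(\mathbf{x},\mathbf{u}^{\mathrm{inv}}(\mathbf{x}))\in\mathcal{C}$. Safety filter at time $t$: inputs are the current state $\mathbf{x}_t$, a nominal input $\mathbf{u}^{\mathrm{nom}}_t\in\mathcal{U}$ and a stored sequence $U^{\mathrm{safe}}_t=(\bar{\mathbf{u}}_t,\dots,\bar{\mathbf{u}}_{t+H-1})$.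 It computes $\mathbf{x}^{\mathrm{pred}}=f(\mathbf{x}_t,\mathbf{u}^{\mathrm{nom}}_t)$, draws $N$ sequences $U^1_{t+1},\dots,U^N_{t+1}$ from a sampling distribution $\tilde q_{t+1}$ on $\mathcal{U}^H$, rolls each out from $\mathbf{x}^{\mathrm{pred}}$, and lets $i^*$ minimize the cost. If the minimum cost is negative (the filter does not intervene; written $\mathbf{u}^{\mathrm{safe}}_t=\mathbf{u}^{\mathrm{nom}}_t$), it outputs $\mathbf{u}^{\mathrm{safe}}_t=\mathbf{u}^{\mathrm{nom}}_t$ and stores $U^{\mathrm{safe}}_{t+1}=U^{i^*}_{t+1}$. Otherwise (the filter intervenes), it outputs $\mathbf{u}^{\mathrm{safe}}_t=\bar{\mathbf{u}}_t$ and stores the shifted sequence $U^{\mathrm{safe}}_{t+1}=(\bar{\mathbf{u}}_{t+1},\dots,\bar{\mathbf{u}}_{t+H-1},\mathbf{u}^{\mathrm{inv}}(\bar{\mathbf{x}}))$, where $\bar{\mathbf{x}}$ is the terminal state of the rollout of $U^{\mathrm{safe}}_t$ from $\mathbf{x}_t$, i.e., the appended last input keeps the system inside $\mathcal{C}$. The closed-loop system applies $\mathbf{u}^{\mathrm{safe}}_t$. *)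

From mathcomp Require Import all_boot all_order all_algebra.
From mathcomp Require Import reals.
From Stdlib Require List.
Set Implicit Arguments. Unset Strict Implicit. Unset Printing Implicit Defensive.
Import Order.TTheory GRing.Theory Num.Theory.
Local Open Scope ring_scope.

Section Defs.
Variables (R : realType) (X U : Type).
Variable (f : X -> U -> X) (l : X -> R).

Definition failure_set (x : X) : Prop := l x <= 0.

Definition rollout_tail (x : X) (s : seq U) : seq X := scanl f x s.
Definition rollout (x : X) (s : seq U) : seq X := x :: rollout_tail x s.
Definition terminal (x : X) (s : seq U) : X := last x (rollout_tail x s).

Definition traj_safe (x : X) (s : seq U) : Prop :=
  forall y, List.In y (rollout x s) -> ~ failure_set y.

Definition cost (x : X) (s : seq U) : R :=
  foldr Num.max (- l x) [seq - l y | y <- rollout_tail x s].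

Definition safe_control_invariant (C : X -> Prop) (uinv : X -> U) : Prop :=
  (forall x, C x -> ~ failure_set x) /\ (forall x, C x -> C (f x (uinv x))).

(* One step of the safety filter, as a relation (ties in the argmin are
   resolved arbitrarily).  Inputs: current state x, nominal input unom,
   stored sequence Us, samples (the N drawn sequences).  Outputs: the
   flag [interv] (true iff the filter intervenes), the applied input
   [usafe], and the new stored sequence [Us']. *)
Definition filter_step (uinv : X -> U) (x : X) (unom : U) (Us : seq U)
    (samples : seq (seq U)) (interv : bool) (usafe : U) (Us' : seq U) : Prop :=
  let xpred := f x unom in
  exists2 istar, List.In istar samples &
    (forall j, List.In j samples -> cost xpred istar <= cost xpred j) /\
    ((cost xpred istar < 0 /\ interv = false /\ usafe = unom /\ Us' = istar) \/
     (~ (cost xpred istar < 0) /\ interv = true /\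
      (exists ubar rest, Us = ubar :: rest /\ usafe = ubar /\
         Us' = rcons rest (uinv (terminal x Us))))).

End Defs.

(* Recursive feasibility: the stored sequence is always a safe backup plan
   from the next state, i.e. a safe rollout of length H ending in C.  When
   the filter does not intervene the stored sample is one (its cost is
   negative and its terminal state lies in C by the sampling restriction);
   when it intervenes, dropping the first input of the previous backup plan
   and appending the invariance input keeps it one, because C is safe and
   control invariant.  Non-intervention at t = 0 starts the induction. *)
From mathcomp Require Import all_boot all_order all_algebra.
From mathcomp Require Import reals.
From Stdlib Require List.
Set Implicit Arguments. Unset Strict Implicit. Unset Printing Implicit Defensive.
Import Order.TTheory GRing.Theory Num.Theory.
Local Open Scope ring_scope.

Lemma foldr_max_lt (R : realDomainType) (a b : R) (s : seq R) :
  foldr Num.max a s < b -> a < b /\ forall y, List.In y s -> y < b.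
Proof.
elim: s => [|c s IHs] /=; first by split=> // y [].
by rewrite gt_max => /andP[ltcb /IHs[ltab lt_sb]]; split=> // y [<-|/lt_sb].
Qed.

Section Rollouts.
Variables (R : realType) (X U : Type) (f : X -> U -> X) (l : X -> R).

Lemma cost_lt0_traj_safe x s : cost f l x s < 0 -> traj_safe f l x s.
Proof.
rewrite /cost => /foldr_max_lt[head_lt0 tail_lt0] y y_in.
rewrite /failure_set; apply/negP; rewrite -ltNge -oppr_lt0.
case: y_in => [<- //|y_in]; apply: tail_lt0.
exact: List.in_map (fun z => - l z) _ _ y_in.
Qed.

Lemma terminalE x s : terminal f x s = foldl f x s.
Proof. by elim: s x => //= u s IHs x; rewrite -IHs. Qed.

Lemma terminal_rcons x s u : terminal f x (rcons s u) = f (terminal f x s) u.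
Proof. by rewrite !terminalE -cats1 foldl_cat. Qed.

Lemma rollout_tail_rcons x s u :
  rollout_tail f x (rcons s u) = rcons (rollout_tail f x s) (f (terminal f x s) u).
Proof. by rewrite /rollout_tail scanl_rcons -terminal_rcons terminalE. Qed.

Lemma traj_safe_behead x u s : traj_safe f l x (u :: s) -> traj_safe f l (f x u) s.
Proof. by move=> safe_us y y_in; apply: safe_us; right. Qed.

Lemma traj_safe_rcons x s u :
  traj_safe f l x s -> ~ failure_set l (f (terminal f x s) u) ->
  traj_safe f l x (rcons s u).
Proof.
move=> safe_s safe_last y.
rewrite /rollout rollout_tail_rcons -rcons_cons -cats1 => y_in.
have [|[<-|[]]] // := List.in_app_or (rollout f x s) [:: f (terminal f x s) u] y y_in.
exact: safe_s.
Qed.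

End Rollouts.

Section FilterStep.
Variables (R : realType) (X U : Type) (f : X -> U -> X) (l : X -> R).
Variables (H : nat) (C : X -> Prop) (uinv : X -> U).
Hypothesis C_safe_invariant : safe_control_invariant f l C uinv.

Definition safe_backup (x : X) (s : seq U) : Prop :=
  [/\ size s = H, traj_safe f l x s & C (terminal f x s)].

Lemma safe_backup_shift x u s :
  safe_backup x (u :: s) -> safe_backup (f x u) (rcons s (uinv (terminal f x (u :: s)))).
Proof.
have [C_safe C_inv] := C_safe_invariant.
move=> [size_us safe_us C_term]; split.
- by rewrite size_rcons; case: size_us.
- by apply: traj_safe_rcons; [exact: traj_safe_behead safe_us | exact/C_safe/C_inv].
- by rewrite terminal_rcons; exact: C_inv.
Qed.

Variables (x : X) (unom : U) (samples : seq (seq U)).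
Hypothesis samples_size : forall s, List.In s samples -> size s = H.
Hypothesis samples_terminal : forall s, List.In s samples -> C (terminal f (f x unom) s).

Lemma filter_step_safe_backup Us interv usafe Us' :
  filter_step f l uinv x unom Us samples interv usafe Us' ->
  (interv -> safe_backup x Us) -> safe_backup (f x usafe) Us'.
Proof.
move=> [istar istar_in [_ [[cost_lt0 [_ [-> ->]]] | [_ [-> [ubar [rest [-> [-> ->]]]]]]]]].
  split; [exact: samples_size | exact: cost_lt0_traj_safe | exact: samples_terminal].
by move=> /(_ isT); exact: safe_backup_shift.
Qed.

End FilterStep.

Theorem proposition2 (R : realType) (X U : Type) (f : X -> U -> X) (l : X -> R)
  (H : nat) (C : X -> Prop) (uinv : X -> U)
  (x : nat -> X) (unom : nat -> U) (usafe : nat -> U) (Us : nat -> seq U)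
  (samples : nat -> seq (seq U)) (interv : nat -> bool) :
  (0 < H)%N ->
  safe_control_invariant f l C uinv ->
  size (Us 0%N) = H ->
  (* at each time: N >= 1 samples, each in U^H, each with terminal state in C *)
  (forall t, samples t <> [::]) ->
  (forall t s, List.In s (samples t) -> size s = H) ->
  (forall t s, List.In s (samples t) -> C (terminal f (f (x t) (unom t)) s)) ->
  (* closed loop *)
  (forall t, filter_step f l uinv (x t) (unom t) (Us t) (samples t)
                 (interv t) (usafe t) (Us t.+1)) ->
  (forall t, x t.+1 = f (x t) (usafe t)) ->
  (* the filter does not intervene at t = 0 *)
  interv 0%N = false ->
  forall t, exists Ut : seq U, size Ut = H /\ traj_safe f l (x t.+1) Ut.
Proof.
move=> _ C_safe_inv _ _ samples_size samples_terminal step x_next interv0.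
have backup t : safe_backup f l H C (x t.+1) (Us t.+1).
  elim: t => [|t IHt]; rewrite x_next;
    apply: (filter_step_safe_backup C_safe_inv (samples_size _) (samples_terminal _) (step _)).
    by rewrite interv0.
  by move=> _; exact: IHt.
by move=> t; have [size_Us safe_Us _] := backup t; exists (Us t.+1).
Qed.
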